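(* Let $p\in[1,\infty)$, $w$ a weight sequence, and let $A\subset L_{p,w}$ be bounded in $\|\cdot\|_{p,w}$ and equinormed with respect to $\{\|\cdot\|_{p,w,i}\}_{i\in\mathbb{N}}$. Then $$\forall\varepsilon>0\ \exists N\in\mathbb{N}\ \forall a\in A\ \forall i\ge N:\ \|(a_{i+1},a_{i+2},\dots)\|_{p,w}^p<\varepsilon.$$
   Context: A weight sequence is a sequence $w=(w_i)$ of positive reals with $w_1=1\ge w_2\ge\dots$, $w_i\to0$, and $\sum_i w_i=+\infty$. For a real sequence $a$, $\|a\|_{p,w}=\sup_{\sigma}\big(\sum_{i=1}^\infty |a_{\sigma_i}|^p w_i\big)^{1/p}$ over all permutations $\sigma$ of $\mathbb{N}$; $L_{p,w}$ is the set of real sequences with finite norm. $\|a\|_{p,w,i}=\|(a_1,\dots,a_i,0,0,\dots)\|_{p,w}$. $A$ is equinormed if $\forall\varepsilon>0\ \exists i\ \forall a\in A:\ \|a\|_{p,w}\le\|a\|_{p,w,i}+\varepsilon$. *)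

(* MathComp + MathComp-Analysis, R : realType.
   Sequences are indexed from 0: the paper's a_1, a_2, ... is a 0, a 1, ... *)
From mathcomp Require Import all_boot all_order all_algebra.
From mathcomp Require Import all_classical all_reals all_analysis.
Set Implicit Arguments. Unset Strict Implicit. Unset Printing Implicit Defensive.
Import Order.TTheory GRing.Theory Num.Theory.
Local Open Scope classical_set_scope.
Local Open Scope ring_scope.

Section Lorentz.
Context {R : realType}.

Definition weight_seq (w : nat -> R) : Prop :=
  [/\ w 0%N = 1,
      (forall i, 0 < w i),
      (forall i, w i.+1 <= w i),
      w @ \oo --> 0
    & (\sum_(0 <= i <oo) (w i)%:E = +oo)%E].

Definition lpw_normp (p : R) (w : nat -> R) (a : nat -> R) : \bar R :=
  ereal_sup [set (\sum_(0 <= i <oo) ((`|a (s i)| `^ p * w i)%:E))%E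
            | s in [set s : nat -> nat | bijective s]].

Definition lpw_norm (p : R) (w : nat -> R) (a : nat -> R) : \bar R :=
  (lpw_normp p w a `^ p^-1)%E.

Definition Lpw (p : R) (w : nat -> R) : set (nat -> R) :=
  [set a | (lpw_norm p w a < +oo)%E].

Definition trunc (i : nat) (a : nat -> R) : nat -> R :=
  fun k => if (k < i)%N then a k else 0.

Definition lpw_norm_i (p : R) (w : nat -> R) (i : nat) (a : nat -> R) : \bar R :=
  lpw_norm p w (trunc i a).

Definition tail (i : nat) (a : nat -> R) : nat -> R := fun k => a (k + i)%N.

Definition lpw_bounded (p : R) (w : nat -> R) (A : set (nat -> R)) : Prop :=
  exists M : R, forall a, A a -> (lpw_norm p w a <= M%:E)%E.

Definition equinormed (p : R) (w : nat -> R) (A : set (nat -> R)) : Prop :=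
  forall eps : R, 0 < eps -> exists i : nat, forall a, A a ->
    (lpw_norm p w a <= lpw_norm_i p w i a + eps%:E)%E.

End Lorentz.

From mathcomp Require Import all_boot all_order all_algebra.
From mathcomp Require Import all_classical all_reals all_analysis.
From mathcomp Require Import lra.
Import Order.TTheory GRing.Theory Num.Theory.
Local Open Scope classical_set_scope.
Local Open Scope ring_scope.

(* Work with the p-th power [lpw_normp] of the norm: the supremum, over
   bijections s, of sum_k |a (s k)|^p w k.  Boundedness and the mean value
   bound y^p - x^p <= p M^(p-1) (y - x) turn equinormedness into: for every
   δ > 0 there is i with ||a||^p <= ||trunc i a||^p + δ on A.
   First, the entries of A are uniformly small far out: a near-optimal
   arrangement of trunc i a carries a value below d/2 in some slot q < n0
   (the partial sums of w diverge while the norms are bounded), and swapping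
   an entry |a_k|^p >= d with k >= i into that slot would gain
   d/2 * w n0 > 2δ.
   Then, for j >= i, an arrangement s of tail j a merged with a near-optimal
   arrangement t of trunc i a (the tail fills the slots where t reads zeros)
   is an arrangement of a, up to the at most i slots where t reads one of
   a_0, ..., a_(i-1); there the tail only contributes small entries.  Hence
   ||tail j a||^p <= ||a||^p - ||trunc i a||^p + 2δ <= 3δ. *)

Definition nswap (a b x : nat) : nat :=
  if x == a then b else if x == b then a else x.

Lemma nswapl a b : nswap a b a = b.
Proof. by rewrite /nswap eqxx. Qed.

Lemma nswapr a b : nswap a b b = a.
Proof. by rewrite /nswap eqxx; case: eqP => [->|]. Qed.

Lemma nswap_id a b x : x != a -> x != b -> nswap a b x = x.
Proof. by rewrite /nswap => /negPf -> /negPf ->. Qed.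

Lemma nswapK a b : involutive (nswap a b).
Proof.
move=> x; have [->|xa] := eqVneq x a; first by rewrite nswapl nswapr.
have [->|xb] := eqVneq x b; first by rewrite nswapr nswapl.
by rewrite !nswap_id.
Qed.

Lemma nswap_bij a b : bijective (nswap a b).
Proof. exact: inv_bij (nswapK a b). Qed.

Lemma inj_prefix_bij (u : nat -> nat) n : injective u ->
  exists2 v : nat -> nat, bijective v & forall k, (k < n)%N -> v k = u k.
Proof.
move=> u_inj; elim: n => [|n [v v_bij vu]]; first by exists id => //; exists id.
exists (nswap (v n) (u n) \o v); first exact: bij_comp (nswap_bij _ _) v_bij.
move=> k; rewrite ltnS leq_eqVlt => /predU1P [->|kn] /=.
  by rewrite nswapl.
rewrite (vu k kn) nswap_id //; apply/eqP => ukE.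
- move: ukE; rewrite -(vu k kn) => /(bij_inj v_bij) kE.
  by rewrite kE ltnn in kn.
- by rewrite (u_inj _ _ ukE) ltnn in kn.
Qed.

Lemma merge_inj {t s : nat -> nat} {i j : nat} :
  injective t -> injective s -> (i <= j)%N ->
  injective (fun m => if (t m < i)%N then t m else (s m + j)%N).
Proof.
move=> t_inj s_inj ij m1 m2.
have t_neq_shift m m' : (t m < i)%N -> t m != (s m' + j)%N.
  by move=> tmi; rewrite neq_ltn (leq_trans tmi (leq_trans ij (leq_addl _ _))).
case: ifP => h1; case: ifP => h2 e; first exact: t_inj.
- by move: (t_neq_shift m1 m2 h1); rewrite e eqxx.
- by move: (t_neq_shift m2 m1 h2); rewrite e eqxx.
- by move/eqP: e; rewrite eqn_add2r => /eqP/s_inj.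
Qed.

Lemma count_inj_lt (t : nat -> nat) i n : injective t ->
  (count (fun k => t k < i) (iota 0 n) <= i)%N.
Proof.
move=> t_inj; rewrite -size_filter -(size_map t) -[leqRHS](size_iota 0 i).
apply: uniq_leq_size; first by rewrite map_inj_uniq ?filter_uniq ?iota_uniq.
by move=> y /mapP [k]; rewrite mem_filter => /andP [tki _] ->; rewrite mem_iota.
Qed.

Lemma nneseries_le_ub {R : realType} (u : nat -> \bar R) (x : \bar R) :
  (forall k, (0 <= u k)%E) -> (forall n, (\sum_(0 <= k < n) u k <= x)%E) ->
  (\sum_(0 <= k <oo) u k <= x)%E.
Proof.
move=> u_ge0 ub; apply: lime_le; last exact: nearW.
by apply: is_cvg_nneseries => k _ _; exact: u_ge0.
Qed.

Lemma nneseries_single {R : realType} q (c : R) : 0 <= c ->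
  (\sum_(0 <= m <oo) (if m == q then c else 0)%:E = c%:E)%E.
Proof.
move=> c_ge0; rewrite (@nneseriesD1 _ _ q) // => [|k _]; last by case: ifP.
by rewrite eqxx eseries0 ?adde0 // => m _ /= /negPf ->.
Qed.

Lemma nneseries_count_inj_le {R : realType} (t : nat -> nat) i (c : R) :
  0 <= c -> injective t ->
  (\sum_(0 <= m <oo) (if (t m < i)%N then c else 0)%:E <= (c *+ i)%:E)%E.
Proof.
move=> c_ge0 t_inj; apply: nneseries_le_ub => [m|n].
  by case: ifP => _; rewrite lee_fin.
rewrite sumEFin lee_fin -big_mkcond big_const_seq iter_addr_0.
exact/ler_wpMn2l/count_inj_lt.
Qed.

Lemma powR_sub_le {R : realType} (p x y : R) : 1 <= p -> 0 <= x <= y ->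
  y `^ p - x `^ p <= p * y `^ (p - 1) * (y - x).
Proof.
move=> p_ge1 /andP [x_ge0 xy]; have p_gt0 : 0 < p by apply: lt_le_trans p_ge1.
have powRy1 : y `^ (p - 1) * y = y `^ p.
  have [->|y_neq0] := eqVneq y 0; first by rewrite mulr0 powR0 ?gt_eqF.
  rewrite -[X in _ * X](powRr1 (le_trans x_ge0 xy)) -powRD ?subrK //.
  by rewrite y_neq0 implybT.
have [->|x_gt0] := eqVneq x 0.
  rewrite powR0 ?gt_eqF // !subr0 -mulrA powRy1 -[leLHS]mul1r.
  by rewrite ler_wpM2r ?powR_ge0.
have {x_gt0}x_gt0 : 0 < x by rewrite lt_neqAle eq_sym x_gt0.
have [<-|lt_xy] := eqVneq x y; first by rewrite !subrr mulr0.
have {lt_xy}lt_xy : x < y by rewrite lt_neqAle lt_xy.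
have powR_der z :
    z \in `]x, y[ -> is_derive z 1 (@powR R ^~ p) (p * z `^ (p - 1)).
  by rewrite in_itv => /andP [xz _]; apply: is_derive1_powR; exact: lt_trans xz.
have powR_derivable : {in `[x, y], forall z, derivable (@powR R ^~ p) z 1}.
  move=> z; rewrite in_itv /= => /andP [xz _].
  by apply: derivable_powR; rewrite in_itv /= andbT; exact: lt_le_trans xz.
have [c] := MVT lt_xy powR_der (derivable_within_continuous powR_derivable).
rewrite in_itv /= => /andP [xc cy] ->.
rewrite ler_wpM2r ?subr_ge0 // ler_wpM2l ?(ltW p_gt0) //.
by apply: ge0_ler_powR; rewrite ?nnegrE ?subr_ge0 // ltW // (lt_trans x_gt0).
Qed.

Section Rearrangements.
Context {R : realType} (p : R) (w : nat -> R).
Hypothesis p_gt0 : 0 < p.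
Hypothesis w_ge0 : forall k, 0 <= w k.

Definition arr_term (a : nat -> R) (s : nat -> nat) k : \bar R :=
  (`|a (s k)| `^ p * w k)%:E.

Definition arr_sum (a : nat -> R) (s : nat -> nat) : \bar R :=
  (\sum_(0 <= k <oo) arr_term a s k)%E.

Lemma arr_term_ge0 a s k : (0 <= arr_term a s k)%E.
Proof. by rewrite lee_fin mulr_ge0 ?powR_ge0. Qed.

Lemma arr_sum_ge0 a s : (0 <= arr_sum a s)%E.
Proof. by apply: nneseries_ge0 => k _ _; exact: arr_term_ge0. Qed.

Lemma arr_sum_le_normp a s : bijective s -> (arr_sum a s <= lpw_normp p w a)%E.
Proof. by move=> s_bij; apply: ereal_sup_ubound; exists s. Qed.

Lemma lpw_normp_le_ub a (x : \bar R) :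
  (forall s, bijective s -> (arr_sum a s <= x)%E) -> (lpw_normp p w a <= x)%E.
Proof. by move=> ub; apply: ge_ereal_sup => _ [s s_bij <-]; exact: ub. Qed.

Lemma lpw_normp_ge0 a : (0 <= lpw_normp p w a)%E.
Proof.
apply: le_trans (arr_sum_ge0 a id) _; apply: arr_sum_le_normp; exact: inv_bij.
Qed.

Lemma arr_sum_inj_le_normp a u : injective u ->
  (arr_sum a u <= lpw_normp p w a)%E.
Proof.
move=> u_inj; apply: nneseries_le_ub => [k|n]; first exact: arr_term_ge0.
have [v v_bij vu] := inj_prefix_bij u n u_inj.
apply: le_trans _ (arr_sum_le_normp a _ v_bij).
apply: le_trans _ (nneseries_lim_ge n (fun k _ _ => arr_term_ge0 a v k)).
rewrite (eq_big_nat _ _ (F2 := arr_term a v)) // => k /andP [_ kn].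
by rewrite /arr_term vu.
Qed.

Lemma lpw_normp_le_abs a b : (forall k, `|b k| <= `|a k|) ->
  (lpw_normp p w b <= lpw_normp p w a)%E.
Proof.
move=> ba; apply: lpw_normp_le_ub => s s_bij.
apply: le_trans _ (arr_sum_le_normp a _ s_bij).
apply: lee_nneseries => [k _ _|k _]; first exact: arr_term_ge0.
rewrite lee_fin ler_wpM2r //.
by apply: ge0_ler_powR; rewrite ?nnegrE ?(ltW p_gt0).
Qed.

Lemma abs_trunc_le i (a : nat -> R) k : `|trunc i a k| <= `|a k|.
Proof. by rewrite /trunc; case: ifP => _ //; rewrite normr0. Qed.

Lemma lpw_normp_trunc_le i (a : nat -> R) :
  (lpw_normp p w (trunc i a) <= lpw_normp p w a)%E.
Proof. exact/lpw_normp_le_abs/abs_trunc_le. Qed.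

Lemma powR_abs_trunc i (a : nat -> R) k :
  `|trunc i a k| `^ p = if (k < i)%N then `|a k| `^ p else 0.
Proof. by rewrite /trunc; case: ifP => _ //; rewrite normr0 powR0 ?gt_eqF. Qed.

Lemma lpw_normp_fin_num_le a (x : R) : (lpw_normp p w a <= x%:E)%E ->
  lpw_normp p w a \is a fin_num.
Proof.
by move=> ax; rewrite ge0_fin_numE ?lpw_normp_ge0 // (le_lt_trans ax) ?ltry.
Qed.

Lemma arr_sum_fin_num a u : injective u -> lpw_normp p w a \is a fin_num ->
  arr_sum a u \is a fin_num.
Proof.
move=> u_inj a_fin; rewrite ge0_fin_numE ?arr_sum_ge0 //.
apply: le_lt_trans (arr_sum_inj_le_normp a _ u_inj) _.
by rewrite -ge0_fin_numE ?lpw_normp_ge0.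
Qed.

Lemma lpw_normp_approx a (d : R) : 0 < d -> lpw_normp p w a \is a fin_num ->
  exists2 t, bijective t & (lpw_normp p w a < arr_sum a t + d%:E)%E.
Proof.
move=> d_gt0 a_fin.
have : (lpw_normp p w a - d%:E < lpw_normp p w a)%E.
  by rewrite lteBlDr // lteDl // lte_fin.
by move/ereal_sup_gt => [_ [t t_bij <-]]; rewrite lteBlDr // => ?; exists t.
Qed.

Lemma arr_sum_small_term a s (c : R) n :
  (arr_sum a s < (c * \sum_(0 <= m < n) w m)%:E)%E ->
  exists2 q, (q < n)%N & `|a (s q)| `^ p < c.
Proof.
move=> lt_sum; apply: contrapT => no_small.
move: lt_sum; apply/negP; rewrite -leNgt.
apply: le_trans _ (nneseries_lim_ge n (fun k _ _ => arr_term_ge0 a s k)).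
rewrite /arr_term sumEFin lee_fin mulr_sumr big_nat_cond [leRHS]big_nat_cond.
apply: ler_sum => m /andP [/andP [_ mn] _]; rewrite ler_wpM2r //.
by rewrite leNgt; apply/negP => small; apply: no_small; exists m.
Qed.

Lemma arr_sum_nswap_ge (x a : nat -> R) t q r :
  (forall k, `|x k| <= `|a k|) -> x (t r) = 0 ->
  `|x (t q)| `^ p <= `|a (t r)| `^ p ->
  (arr_sum x t + ((`|a (t r)| `^ p - `|x (t q)| `^ p) * w q)%:E
     <= arr_sum a (t \o nswap q r))%E.
Proof.
move=> xa xtr0 le_qr.
set c := (_ - _) * w q; have c_ge0 : 0 <= c by rewrite mulr_ge0 ?subr_ge0.
rewrite -(nneseries_single q c c_ge0) /arr_sum -nneseriesD; last 2 first.
- by move=> m _ _; exact: arr_term_ge0.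
- by move=> m _ _; case: ifP => _; rewrite lee_fin.
apply: lee_nneseries => [m _ _|m _].
  by rewrite adde_ge0 ?arr_term_ge0 //; case: ifP => _; rewrite lee_fin.
rewrite /arr_term /=; have [->|mq] := eqVneq m q.
  by rewrite nswapl -EFinD /c -mulrDl addrC subrK.
rewrite -EFinD addr0; have [->|mr] := eqVneq m r.
  rewrite nswapr xtr0 normr0 powR0 ?gt_eqF // mul0r.
  by rewrite lee_fin mulr_ge0 ?powR_ge0.
rewrite nswap_id // lee_fin ler_wpM2r //.
by apply: ge0_ler_powR; rewrite ?nnegrE ?(ltW p_gt0).
Qed.

Section UniformTails.
Variables (A : set (nat -> R)) (B : R).
Hypothesis w_gt0 : forall k, 0 < w k.
Hypothesis w_nonincr : {homo w : m n / (m <= n)%N >-> n <= m}.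
Hypothesis w_sum_pinfty : (\sum_(0 <= k <oo) (w k)%:E = +oo)%E.
Hypothesis A_bounded : forall a, A a -> (lpw_normp p w a <= B%:E)%E.
Hypothesis A_equinormed : forall d, 0 < d -> exists i, forall a, A a ->
  (lpw_normp p w a <= lpw_normp p w (trunc i a) + d%:E)%E.

Lemma weight_partial_sum_gt (x : R) : exists n, x < \sum_(0 <= k < n) w k.
Proof.
apply/not_existsP => small_sums.
have : (\sum_(0 <= k <oo) (w k)%:E <= x%:E)%E.
  apply: nneseries_le_ub => [k|n]; first by rewrite lee_fin.
  by rewrite sumEFin lee_fin leNgt; apply/negP; exact: small_sums.
by rewrite w_sum_pinfty leNgt ltry.
Qed.

Lemma arr_sum_trunc_tail_le {a t s i j} {c : R} :
  injective t -> injective s -> (i <= j)%N ->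
  (forall k, (j <= k)%N -> `|a k| `^ p <= c) ->
  (arr_sum (trunc i a) t + arr_sum (tail j a) s
     <= lpw_normp p w a + ((c * w 0) *+ i)%:E)%E.
Proof.
move=> t_inj s_inj ij a_small.
have c_ge0 : 0 <= c := le_trans (powR_ge0 _ _) (a_small j (leqnn j)).
have cw_ge0 : 0 <= c * w 0 by rewrite mulr_ge0.
apply: le_trans _ (leeD (arr_sum_inj_le_normp a _ (merge_inj t_inj s_inj ij))
  (nneseries_count_inj_le t i _ cw_ge0 t_inj)).
rewrite /arr_sum -!nneseriesD; last 4 first.
- by move=> m _ _; exact: arr_term_ge0.
- by move=> m _ _; case: ifP => _; rewrite lee_fin.
- by move=> m _ _; exact: arr_term_ge0.
- by move=> m _ _; exact: arr_term_ge0.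
apply: lee_nneseries => [m _ _|m _]; first by rewrite adde_ge0 ?arr_term_ge0.
rewrite /arr_term /tail powR_abs_trunc -!EFinD lee_fin.
case: ifP => _; last by rewrite mul0r add0r addr0.
by rewrite lerD2l ler_pM ?powR_ge0 ?a_small ?leq_addl ?w_nonincr.
Qed.

Lemma lpw_normp_trunc_fin_num_A i a : A a ->
  lpw_normp p w (trunc i a) \is a fin_num.
Proof.
move=> Aa; apply: (lpw_normp_fin_num_le _ B).
exact: le_trans (lpw_normp_trunc_le i a) (A_bounded a Aa).
Qed.

Lemma uniformly_small_entries d : 0 < d ->
  exists N, forall a, A a -> forall k, (N <= k)%N -> `|a k| `^ p < d.
Proof.
move=> d_gt0; have [n0 n0_large] := weight_partial_sum_gt (2 * B / d).
pose δ := d * w n0 / 8.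
have δ_gt0 : 0 < δ by rewrite divr_gt0 ?mulr_gt0.
have [i i_equi] := A_equinormed _ δ_gt0.
exists i => a Aa k ik; rewrite ltNge; apply/negP => a_k_large.
pose x := trunc i a.
have x_fin := lpw_normp_trunc_fin_num_A i a Aa.
have [t t_bij t_near] := lpw_normp_approx x _ δ_gt0 x_fin.
have xt_le_B : (arr_sum x t <= B%:E)%E.
  apply: le_trans (arr_sum_le_normp x _ t_bij) _.
  exact: le_trans (lpw_normp_trunc_le i a) (A_bounded a Aa).
have [q q_lt_n0 x_tq_small] : exists2 q, (q < n0)%N & `|x (t q)| `^ p < d / 2.
  apply: arr_sum_small_term; apply: le_lt_trans xt_le_B _; rewrite lte_fin.
  by move: n0_large; rewrite ltr_pdivrMr //; lra.
have [g _ gt] := t_bij.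
have x_tr0 : x (t (g k)) = 0 by rewrite gt /x /trunc ltnNge ik.
have le_qr : `|x (t q)| `^ p <= `|a (t (g k))| `^ p.
  rewrite gt; apply/ltW/(lt_le_trans x_tq_small).
  by rewrite leNgt in a_k_large; lra.
have gain := arr_sum_nswap_ge x a t q (g k) (abs_trunc_le i a) x_tr0 le_qr.
rewrite gt in gain.
have S_fin : arr_sum x t \is a fin_num.
  exact: arr_sum_fin_num (bij_inj t_bij) x_fin.
have : (arr_sum x t + ((`|a k| `^ p - `|x (t q)| `^ p) * w q)%:E
        < arr_sum x t + (δ + δ)%:E)%E.
  have u_bij := bij_comp t_bij (nswap_bij q (g k)).
  apply: le_lt_trans (le_trans gain (arr_sum_le_normp a _ u_bij)) _.
  apply: le_lt_trans (i_equi a Aa) _.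
  by rewrite EFinD addeA lteD2rE.
rewrite lteD2lE // lte_fin.
have w_q : w n0 <= w q by apply: w_nonincr; exact: ltnW.
have : d / 2 * w n0 <= (`|a k| `^ p - `|x (t q)| `^ p) * w q.
  apply: le_trans (ler_wpM2l _ w_q) (ler_wpM2r (w_ge0 q) _).
    by rewrite divr_ge0 ?ltW.
  rewrite leNgt in a_k_large; lra.
have := mulr_gt0 d_gt0 (w_gt0 n0); rewrite /δ; lra.
Qed.

Lemma uniformly_small_tails eps : 0 < eps ->
  exists N, forall a, A a -> forall j, (N <= j)%N ->
    (lpw_normp p w (tail j a) < eps%:E)%E.
Proof.
move=> eps_gt0; pose δ := eps / 4.
have δ_gt0 : 0 < δ by rewrite divr_gt0.
have [i i_equi] := A_equinormed _ δ_gt0.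
pose c := δ / (w 0 * i.+1%:R).
have c_gt0 : 0 < c by rewrite divr_gt0 ?mulr_gt0 ?ltr0n.
have ci_le : (c * w 0) *+ i <= δ.
  have <- : c * (w 0 * i.+1%:R) = δ.
    by rewrite divfK // mulf_neq0 ?gt_eqF ?ltr0n.
  by rewrite -mulr_natr -mulrA !ler_pM2l // ler_nat.
have [N a_small] := uniformly_small_entries _ c_gt0.
exists (maxn i N) => a Aa j; rewrite geq_max => /andP [ij Nj].
have a_tail_small k : (j <= k)%N -> `|a k| `^ p <= c.
  by move=> jk; apply/ltW/a_small/(leq_trans Nj).
pose x := trunc i a.
have x_fin := lpw_normp_trunc_fin_num_A i a Aa.
have [t t_bij t_near] := lpw_normp_approx x _ δ_gt0 x_fin.
have S_fin := arr_sum_fin_num x _ (bij_inj t_bij) x_fin.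
apply: (@le_lt_trans _ _ (δ + δ + δ)%:E); last by rewrite lte_fin /δ; lra.
apply: lpw_normp_le_ub => s s_bij; rewrite -(leeD2lE _ _ S_fin).
have := arr_sum_trunc_tail_le (bij_inj t_bij) (bij_inj s_bij) ij a_tail_small.
move/le_trans; apply.
apply: le_trans (leeD (i_equi a Aa) (_ : ((c * w 0) *+ i)%:E <= δ%:E)%E) _.
  by rewrite lee_fin.
by rewrite !EFinD !addeA !leeD2rE // ltW.
Qed.

End UniformTails.

End Rearrangements.

Section NormToPower.
Context {R : realType} (p : R) (w : nat -> R).
Hypothesis p_ge1 : 1 <= p.
Hypothesis w_ge0 : forall k, 0 <= w k.

Let p_gt0 : 0 < p := lt_le_trans ltr01 p_ge1.

Lemma lpw_norm_powR a : (lpw_norm p w a `^ p)%E = lpw_normp p w a.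
Proof.
by rewrite -poweRrM mulVf ?gt_eqF // poweRe1 // lpw_normp_ge0.
Qed.

Lemma lpw_norm_le_EFin {a} {M : R} : (lpw_norm p w a <= M%:E)%E ->
  exists2 na, lpw_norm p w a = na%:E & 0 <= na <= M.
Proof.
move=> aM; have na_ge0 : (0 <= lpw_norm p w a)%E by exact: poweR_ge0.
have na_fin : lpw_norm p w a \is a fin_num.
  by rewrite ge0_fin_numE // (le_lt_trans aM) ?ltry.
exists (fine (lpw_norm p w a)); first by rewrite fineK.
by rewrite -!lee_fin fineK // na_ge0.
Qed.

Lemma lpw_norm_trunc_le i a : (lpw_norm p w (trunc i a) <= lpw_norm p w a)%E.
Proof.
apply: gt0_ler_poweR; last exact: lpw_normp_trunc_le.
- by rewrite invr_ge0 ltW.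
- by rewrite in_itv /= leey lpw_normp_ge0.
- by rewrite in_itv /= leey lpw_normp_ge0.
Qed.

Lemma lpw_bounded_normp A : lpw_bounded p w A ->
  exists B, forall a, A a -> (lpw_normp p w a <= B%:E)%E.
Proof.
move=> [M A_le_M]; exists (M `^ p) => a Aa.
have [na naE /andP [na_ge0 na_le_M]] := lpw_norm_le_EFin (A_le_M a Aa).
rewrite -lpw_norm_powR naE poweR_EFin lee_fin.
by apply: ge0_ler_powR; rewrite ?nnegrE ?(ltW p_gt0) ?(le_trans na_ge0).
Qed.

Lemma lpw_equinormed_normp A : lpw_bounded p w A -> equinormed p w A ->
  forall d, 0 < d -> exists i, forall a, A a ->
    (lpw_normp p w a <= lpw_normp p w (trunc i a) + d%:E)%E.
Proof.
move=> [M A_le_M] A_equi d d_gt0.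
pose K := p * M `^ (p - 1) + 1.
have K_gt0 : 0 < K by rewrite ltr_wpDl ?mulr_ge0 ?powR_ge0 ?(ltW p_gt0).
have [i i_equi] := A_equi _ (divr_gt0 d_gt0 K_gt0).
exists i => a Aa.
have [na naE /andP [na_ge0 na_le_M]] := lpw_norm_le_EFin (A_le_M a Aa).
have x_le_na : (lpw_norm p w (trunc i a) <= na%:E)%E.
  by rewrite -naE lpw_norm_trunc_le.
have [nx nxE /andP [nx_ge0 nx_le_na]] := lpw_norm_le_EFin x_le_na.
have := i_equi a Aa; rewrite /lpw_norm_i naE nxE -EFinD lee_fin -lerBlDl.
move=> na_sub.
rewrite -!lpw_norm_powR naE nxE !poweR_EFin -EFinD lee_fin -lerBlDl.
apply: le_trans (powR_sub_le p nx na p_ge1 _) _; first by rewrite nx_ge0.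
have pow_le : na `^ (p - 1) <= M `^ (p - 1).
  by apply: ge0_ler_powR; rewrite ?nnegrE ?subr_ge0 ?(le_trans na_ge0).
apply: le_trans (ler_pM _ _ (ler_wpM2l (ltW p_gt0) pow_le) na_sub) _.
- by rewrite mulr_ge0 ?powR_ge0 ?(ltW p_gt0).
- by rewrite subr_ge0.
- have pM_le_K : p * M `^ (p - 1) <= K by rewrite lerDl.
  apply: le_trans (ler_wpM2r (divr_ge0 (ltW d_gt0) (ltW K_gt0)) pM_le_K) _.
  by rewrite mulrC divfK ?lt0r_neq0.
Qed.

End NormToPower.

Theorem mainTheorem13 (R : realType) (p : R) (w : nat -> R) (A : set (nat -> R)) :
  1 <= p -> weight_seq w -> A `<=` Lpw p w ->
  lpw_bounded p w A -> equinormed p w A ->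
  forall eps : R, 0 < eps -> exists N : nat, forall a, A a -> forall i : nat,
    (N <= i)%N -> (lpw_norm p w (tail i a) `^ p < eps%:E)%E.
Proof.
(* Membership in L_{p,w} already follows from boundedness. *)
move=> p_ge1 [_ w_gt0 /nonincreasing_seqP w_nonincr _ w_sum] _ A_bdd A_equi.
move=> eps eps_gt0.
have p_gt0 : 0 < p := lt_le_trans ltr01 p_ge1.
have w_ge0 k : 0 <= w k := ltW (w_gt0 k).
have [B A_le_B] := lpw_bounded_normp p w p_ge1 w_ge0 A A_bdd.
have A_equi_normp := lpw_equinormed_normp p w p_ge1 w_ge0 A A_bdd A_equi.
have [N tails_small] := uniformly_small_tails p w p_gt0 w_ge0 A B
  w_gt0 w_nonincr w_sum A_le_B A_equi_normp _ eps_gt0.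
exists N => a Aa i iN.
by rewrite (lpw_norm_powR p w p_ge1 w_ge0); exact: tails_small.
Qed.
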